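(* For every $n$ there exist two sets $A$ and $B$, each consisting of $n$ pairwise disjoint axis-aligned rectangles in the plane, such that every sequence of sets $A=X_0,X_1,\dots,X_m=B$ in which each $X_j$ is an independent set of $A\cup B$ and consecutive sets differ by exactly one rectangle contains an empty set $X_j=\emptyset$; in particular no MIX function for rectangles has $\Gamma(n)<n$. Consequently, for any $\beta>0$, there is no fully dynamic data structure maintaining a $\beta$-approximate maximum independent set of axis-aligned rectangles that reports at most $o(n)$ changes in the independent set per update.
   Context: An independent set of a set of rectangles is a subset of pairwise disjoint rectangles; $\mathrm{OPT}(S)$ is the maximum size of an independent set of $S$. A MIX function assigns to independent sets $A,B$ a sequence $\mathrm{MIX}(A,B,i)$, $i\in[0,|A|+|B|]$, of independent sets with $\mathrm{MIX}(A,B,0)=A$, $\mathrm{MIX}(A,B,|A|+|B|)=B$, consecutive sets differing by one item, and $|\mathrm{MIX}(A,B,i)|\ge\min(|A|,|B|)-\Gamma(|A|+|B|)$. A fully dynamic data structure maintains a set $S$ of rectangles, initially empty, under updates $u$ replacing $S$ by $S\oplus\{u\}$ (insert if absent, delete if present), and after each update reports the symmetric difference between the previous and new maintained set $I\subseteq S$; it is $\beta$-approximate if $I$ is always an independent set with $|I|\ge\beta\,\mathrm{OPT}(S)$. Here $n$ is the number of stored rectangles. *)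

From HB Require Import structures.
From mathcomp Require Import all_boot all_order all_algebra.
From mathcomp Require Import finmap.
From mathcomp Require Import boolp.
Set Implicit Arguments. Unset Strict Implicit. Unset Printing Implicit Defensive.
Import Order.TTheory GRing.Theory Num.Theory.
Local Open Scope ring_scope.
Local Open Scope fset_scope.

Section Rects.
Variable R : realFieldType.

(* An axis-aligned rectangle ((x1, x2), (y1, y2)) denotes the closed box
   [x1,x2] x [y1,y2]; it is a genuine rectangle when x1 < x2 and y1 < y2. *)
Definition rect := ((R * R) * (R * R))%type.

Definition valid_rect (r : rect) : bool :=
  (r.1.1 < r.1.2) && (r.2.1 < r.2.2).

Definition in_rect (p : R * R) (r : rect) : bool :=
  (r.1.1 <= p.1 <= r.1.2) && (r.2.1 <= p.2 <= r.2.2).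

Definition rect_disjoint (r s : rect) : Prop :=
  forall p : R * R, ~ (in_rect p r /\ in_rect p s).

Definition independent (X : {fset rect}) : Prop :=
  forall r s, r \in X -> s \in X -> r <> s -> rect_disjoint r s.

Definition OPT (S : {fset rect}) : nat :=
  \max_(X <- fpowerset S | `[< independent X >]) #|` X|.

Definition fsymdiff (X Y : {fset rect}) : {fset rect} := (X `\` Y) `|` (Y `\` X).

Definition is_MIX (MIX : {fset rect} -> {fset rect} -> nat -> {fset rect})
    (Gamma : nat -> R) : Prop :=
  forall A B : {fset rect}, independent A -> independent B ->
    let N := (#|` A| + #|` B|)%N in
    [/\ MIX A B 0 = A, MIX A B N = B,
        (forall i, (i <= N)%N -> independent (MIX A B i) /\ MIX A B i `<=` A `|` B),
        (forall i, (i < N)%N -> #|` fsymdiff (MIX A B i) (MIX A B i.+1)| = 1%N) &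
        (forall i, (i <= N)%N ->
           (minn #|` A| #|` B|)%:R - Gamma N <= (#|` MIX A B i|)%:R)].

(* Fully dynamic setting.  An update history is a sequence of rectangles; each
   update u replaces S by S (+) {u}.  The stored set after history h: *)
Definition stored (h : seq rect) : {fset rect} :=
  foldl (fun S u => fsymdiff S [fset u]) fset0 h.

(* A (deterministic) fully dynamic data structure is described by the set
   D h it maintains after the update history h. *)
Definition dyn_beta_approx (beta : R) (D : seq rect -> {fset rect}) : Prop :=
  forall h : seq rect, all valid_rect h ->
    [/\ D h `<=` stored h, independent (D h) &
        beta * (OPT (stored h))%:R <= (#|` D h|)%:R].

Definition dyn_recourse_bound (D : seq rect -> {fset rect}) (f : nat -> R) : Prop :=
  forall (h : seq rect) (u : rect), all valid_rect (rcons h u) ->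
    (#|` fsymdiff (D h) (D (rcons h u))|)%:R <= f #|` stored (rcons h u)|.

Definition little_o_n (f : nat -> R) : Prop :=
  forall eps : R, 0 < eps -> exists N : nat, forall n : nat, (N <= n)%N ->
    `|f n| <= eps * n%:R.

End Rects.

(** Take [n] horizontal bars [A] and [n] vertical bars [B] arranged as a grid,
    so that every bar of [A] crosses every bar of [B].  An independent subset
    of [A `|` B] then lies entirely in [A] or entirely in [B].  A sequence of
    independent sets from [A] to [B] must at some step leave the subsets of
    [A]; that step jumps from a subset of [A] to a subset of [B], so it changes
    [|X_k| + |X_(k+1)|] rectangles.  As this is [1], one of them is empty.

    For the dynamic problem, insert [A], then insert [B], then delete [A].
    From the moment [A] is in, [OPT >= n] while at most [2n] rectangles are
    stored, so a [beta]-approximate solution keeps at least [beta n]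
    rectangles, all in [A] or all in [B].  It starts inside [A] and ends
    inside [B], so some single update replaces at least [2 beta n] of them,
    which is not [o(n)]. *)

From HB Require Import structures.
From mathcomp Require Import all_boot all_order all_algebra.
From mathcomp Require Import finmap.
From mathcomp Require Import boolp reals.
From mathcomp Require Import zify lra.
Import Order.TTheory GRing.Theory Num.Theory.
Local Open Scope ring_scope.
Local Open Scope fset_scope.
Set Implicit Arguments. Unset Strict Implicit.

Lemma exists_exit (P : pred nat) lo hi : (lo <= hi)%N -> P lo -> ~~ P hi ->
  exists2 k, (lo <= k < hi)%N & P k && ~~ P k.+1.
Proof.
elim: hi => [|hi IH]; first by rewrite leqn0 => /eqP-> ->.
rewrite leq_eqVlt => /orP[/eqP-> -> //|]; rewrite ltnS => lo_hi Plo nPhi1.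
have [Phi|nPhi] := boolP (P hi); first by exists hi; rewrite ?lo_hi ?ltnSn ?Phi.
have [k /andP[lo_k k_hi] Pk] := IH lo_hi Plo nPhi.
by exists k; rewrite ?lo_k ?ltnS ?(ltnW k_hi).
Qed.

Section StoredSets.
Variable R : realFieldType.
Implicit Types (h : seq (rect R)) (X Y S : {fset rect R}).

Lemma in_stored h x : (x \in stored h) = odd (count_mem x h).
Proof.
elim/last_ind: h => [|h u IH]; first by rewrite /stored /= inE.
rewrite /stored foldl_rcons -/(stored h) /fsymdiff !inE IH -cats1 count_cat /=.
by rewrite addn0 oddD (eq_sym u x); case: (odd _); case: (x == u).
Qed.

Lemma mem_stored h x : x \in stored h -> x \in h.
Proof. by rewrite in_stored -has_pred1 has_count => /odd_gt0. Qed.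

Lemma card_fsymdiff_disjoint X Y :
  [disjoint X & Y] -> #|` fsymdiff X Y| = (#|` X| + #|` Y|)%N.
Proof.
move=> dXY; have dYX : [disjoint Y & X] by rewrite fdisjoint_sym.
rewrite /fsymdiff (fsetDidPl _ _ dXY) (fsetDidPl _ _ dYX) -cardfsUI.
by rewrite (disjoint_fsetI0 dXY) cardfs0 addn0.
Qed.

Lemma leq_card_OPT S X : X `<=` S -> independent X -> (#|` X| <= OPT S)%N.
Proof.
move=> XS iX; apply: (@leq_bigmax_seq _ _ (fun X => `[< independent X >])).
  by rewrite fpowersetE.
exact/asboolP.
Qed.

End StoredSets.

Section CrossingFamilies.
Variables (R : realFieldType) (A B : {fset rect R}).
Hypothesis AB_cross : forall a b, a \in A -> b \in B -> ~ rect_disjoint a b.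
Hypothesis AB_disjoint : [disjoint A & B].

Lemma independent_sub_side X :
  X `<=` A `|` B -> independent X -> X `<=` A \/ X `<=` B.
Proof.
move=> XAB iX; have [XA|/fsubsetPn[y yX yA]] := boolP (X `<=` A); [by left|right].
have yB : y \in B by have := fsubsetP XAB y yX; rewrite inE (negbTE yA).
apply/fsubsetP => x xX; have := fsubsetP XAB x xX; rewrite inE.
case/orP => // xA; exfalso; apply: (AB_cross xA yB); apply: iX => // xy.
by move: yA; rewrite -xy xA.
Qed.

Lemma sub_B_not_sub_A X : X `<=` B -> X != fset0 -> ~~ (X `<=` A).
Proof.
move=> XB /fset0Pn[x xX]; apply/negP => /fsubsetP/(_ x xX).
exact/negP/(fdisjointP_sym AB_disjoint)/(fsubsetP XB).
Qed.

Lemma exit_step_card (X : nat -> {fset rect R}) lo hi :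
  (lo <= hi)%N -> X lo `<=` A -> ~~ (X hi `<=` A) ->
  (forall j, (lo <= j <= hi)%N -> X j `<=` A `|` B /\ independent (X j)) ->
  exists2 k, (lo <= k < hi)%N &
    #|` fsymdiff (X k) (X k.+1)| = (#|` X k| + #|` X k.+1|)%N.
Proof.
move=> lo_hi XloA XhiA indX.
have [k /andP[lo_k k_hi] /andP[XkA Xk1A]] :=
  exists_exit (P := fun j => X j `<=` A) lo_hi XloA XhiA.
exists k; first by rewrite lo_k k_hi.
have [Xk1AB iXk1] : X k.+1 `<=` A `|` B /\ independent (X k.+1).
  by apply: indX; rewrite k_hi andbT; apply: leqW.
have Xk1B : X k.+1 `<=` B.
  by case: (independent_sub_side Xk1AB iXk1) => //; rewrite (negbTE Xk1A).
by apply: card_fsymdiff_disjoint; apply: fdisjointWl XkA (fdisjointWr Xk1B _).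
Qed.

Lemma reconfiguration_meets_empty m (X : nat -> {fset rect R}) :
  X 0%N = A -> X m = B ->
  (forall j, (j <= m)%N -> X j `<=` A `|` B /\ independent (X j)) ->
  (forall j, (j < m)%N -> #|` fsymdiff (X j) (X j.+1)| = 1%N) ->
  exists2 j, (j <= m)%N & X j = fset0.
Proof.
move=> X0 Xm indX stepX.
have [B0|B_neq0] := eqVneq B fset0; first by exists m; rewrite ?Xm.
have XmA : ~~ (X m `<=` A) by rewrite Xm sub_B_not_sub_A.
have X0A : X 0%N `<=` A by rewrite X0.
have [k /andP[_ km]] := exit_step_card (leq0n m) X0A XmA indX.
rewrite stepX //; case Xk: #|` X k| => [|[|//]] /= => [_|[Xk1]].
  by exists k; [exact: ltnW | exact: cardfs0_eq].
by exists k.+1; last exact: cardfs0_eq.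
Qed.

Definition swap_history : seq (rect R) := A ++ B ++ A.

Lemma size_swap_history : size swap_history = (#|` A| + #|` B| + #|` A|)%N.
Proof. by rewrite !size_cat addnA. Qed.

Lemma stored_swap_prefix_sub k : stored (take k swap_history) `<=` A `|` B.
Proof.
apply/fsubsetP => x /mem_stored/mem_take; rewrite !mem_cat inE.
by case/or3P=> ->; rewrite ?orbT.
Qed.

Lemma stored_swap_prefix_A : stored (take #|` A| swap_history) `<=` A.
Proof. by apply/fsubsetP => x; rewrite take_size_cat // => /mem_stored. Qed.

Lemma stored_swap_history_B : stored swap_history `<=` B.
Proof.
apply/fsubsetP => x xS; have [xA|xA] := boolP (x \in A).
  move: xS; rewrite in_stored !count_cat count_uniq_mem ?fset_uniq // xA.
  by rewrite (count_memPn (fdisjointP AB_disjoint x xA)).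
by move/mem_stored: xS; rewrite !mem_cat (negbTE xA) orbF.
Qed.

Lemma stored_swap_prefix_sup k : (#|` A| <= k)%N ->
  A `<=` stored (take k swap_history) \/ B `<=` stored (take k swap_history).
Proof.
have uniqA := fset_uniq A; have uniqB := fset_uniq B.
move=> Ak; rewrite /swap_history take_cat ltnNge Ak /=.
have [j_B|B_j] := leqP (k - #|` A|) #|` B|; [left|right]; apply/fsubsetP => x x_in.
  have xB := fdisjointP AB_disjoint x x_in.
  rewrite in_stored (takel_cat _ j_B) count_cat count_uniq_mem // x_in.
  by rewrite (count_memPn (contra (@mem_take _ _ _ _) xB)).
have xA := fdisjointP_sym AB_disjoint x x_in.
rewrite in_stored take_cat ltnNge (ltnW B_j) /= !count_cat (count_memPn xA).
by rewrite count_uniq_mem // x_in (count_memPn (contra (@mem_take _ _ _ _) xA)).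
Qed.

Section DynamicApproximation.
Hypotheses (A_independent : independent A) (B_independent : independent B).
Hypothesis card_BA : #|` B| = #|` A|.
Hypothesis AB_valid : forall r, r \in A `|` B -> valid_rect r.
Variables (beta : R) (D : seq (rect R) -> {fset rect R}).
Hypotheses (beta_gt0 : 0 < beta) (D_approx : dyn_beta_approx beta D).

Lemma valid_swap_prefix k : all (@valid_rect R) (take k swap_history).
Proof.
apply/allP => r /mem_take; rewrite !mem_cat => rAB; apply: AB_valid.
by rewrite inE; case/or3P: rAB => ->; rewrite ?orbT.
Qed.

Lemma card_stored_swap_prefix k : (#|` A| <= k)%N ->
  (#|` A| <= #|` stored (take k swap_history)| <= #|` A| + #|` A|)%N.
Proof.
move=> Ak; apply/andP; split.
  by case: (stored_swap_prefix_sup Ak) => /fsubset_leq_card; rewrite ?card_BA.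
apply: leq_trans (fsubset_leq_card (stored_swap_prefix_sub k)) _.
by rewrite cardfsU card_BA leq_subr.
Qed.

Lemma approx_swap_prefix k : (#|` A| <= k)%N ->
  [/\ D (take k swap_history) `<=` A `|` B, independent (D (take k swap_history))
    & beta * #|` A|%:R <= #|` D (take k swap_history)|%:R].
Proof.
move=> Ak; have [DS iD D_large] := D_approx (valid_swap_prefix k).
split => //; first exact: fsubset_trans DS (stored_swap_prefix_sub k).
apply: le_trans D_large; rewrite ler_pM2l // ler_nat.
case: (stored_swap_prefix_sup Ak) => [AS|BS]; first exact: leq_card_OPT.
by rewrite -card_BA; apply: leq_card_OPT.
Qed.

Lemma swap_history_large_recourse : (0 < #|` A|)%N ->
  exists h u, [/\ all (@valid_rect R) (rcons h u),
    (#|` A| <= #|` stored (rcons h u)|)%N &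
    beta * #|` stored (rcons h u)|%:R <= #|` fsymdiff (D h) (D (rcons h u))|%:R].
Proof.
move=> A_gt0; set n := #|` A|; set H := swap_history.
have betan_gt0 : 0 < beta * n%:R by rewrite mulr_gt0 ?ltr0n.
have start : D (take n H) `<=` A.
  have [DS _ _] := D_approx (valid_swap_prefix n).
  exact: fsubset_trans DS stored_swap_prefix_A.
have n_H : (n <= size H)%N by rewrite size_swap_history -addnA leq_addr.
have finish : ~~ (D (take (size H) H) `<=` A).
  have [DS _ _] := D_approx (valid_swap_prefix (size H)).
  have [_ _ D_large] := approx_swap_prefix n_H.
  apply: sub_B_not_sub_A.
    by rewrite take_size in DS *; exact: fsubset_trans DS stored_swap_history_B.
  by rewrite -cardfs_gt0 -(ltr0n R); apply: lt_le_trans D_large.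
have indD j : (n <= j <= size H)%N ->
    D (take j H) `<=` A `|` B /\ independent (D (take j H)).
  by case/andP => nj _; have [] := approx_swap_prefix nj.
have [k /andP[nk kH] stepk] :=
  exit_step_card (X := fun j => D (take j H)) n_H start finish indD.
exists (take k H), (nth ((0, 0), (0, 0)) H k); rewrite -take_nth //.
have [_ _ Dk_large] := approx_swap_prefix nk.
have [_ _ Dk1_large] := approx_swap_prefix (leqW nk).
have /andP[nS S_2n] := card_stored_swap_prefix (leqW nk).
split => //; first exact: valid_swap_prefix.
have : beta * #|` stored (take k.+1 H)|%:R <= beta * (n + n)%:R.
  by rewrite ler_pM2l // ler_nat.
rewrite stepk !natrD mulrDr; lra.
Qed.

End DynamicApproximation.
End CrossingFamilies.

Section Grid.
Variables (R : realFieldType) (n : nat).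

Definition hbar i : rect R := ((-1, (2 * n)%:R), ((2 * i)%:R, (2 * i + 1)%:R)).
Definition vbar j : rect R := (((2 * j)%:R, (2 * j + 1)%:R), (-1, (2 * n)%:R)).
Definition hbars : {fset rect R} := [fset hbar i | i in iota 0 n].
Definition vbars : {fset rect R} := [fset vbar j | j in iota 0 n].

Lemma hbar_inj : injective hbar.
Proof. by move=> i j [_ /eqP]; rewrite eqr_nat => /eqP; lia. Qed.

Lemma vbar_inj : injective vbar.
Proof. by move=> i j [/eqP]; rewrite eqr_nat => /eqP; lia. Qed.

Lemma card_hbars : #|` hbars| = n.
Proof. by rewrite card_imfset /= ?undup_id ?iota_uniq ?size_iota //; apply: hbar_inj. Qed.

Lemma card_vbars : #|` vbars| = n.
Proof. by rewrite card_imfset /= ?undup_id ?iota_uniq ?size_iota //; apply: vbar_inj. Qed.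

Lemma hbarsP r : reflect (exists2 i, (i < n)%N & r = hbar i) (r \in hbars).
Proof.
apply: (iffP idP) => [/imfsetP[i /=]|[i ni ->]].
  by rewrite mem_iota => /andP[_ ni] ->; exists i.
by apply/imfsetP; exists i; rewrite //= mem_iota.
Qed.

Lemma vbarsP r : reflect (exists2 j, (j < n)%N & r = vbar j) (r \in vbars).
Proof.
apply: (iffP idP) => [/imfsetP[j /=]|[j nj ->]].
  by rewrite mem_iota => /andP[_ nj] ->; exists j.
by apply/imfsetP; exists j; rewrite //= mem_iota.
Qed.

Lemma valid_grid r : r \in hbars `|` vbars -> valid_rect r.
Proof.
rewrite /valid_rect inE => /orP[/hbarsP[i _ ->]|/vbarsP[j _ ->]] /=;
  by rewrite ltr_nat addn1 ltnSn ?andbT (lt_le_trans (ltrN10 _)) ?ler0n.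
Qed.

Lemma hbar_vbar_meet i j : (i <= n)%N -> (j <= n)%N -> ~ rect_disjoint (hbar i) (vbar j).
Proof.
move=> i_n j_n /(_ ((2 * j)%:R, (2 * i)%:R)); apply.
have Nm1_nat k : (-1 : R) <= k%:R by exact: le_trans (lerN10 _) (ler0n _ _).
by rewrite /in_rect /= !Nm1_nat !ler_nat; split; repeat (apply/andP; split); lia.
Qed.

Lemma hbars_vbars_cross a b : a \in hbars -> b \in vbars -> ~ rect_disjoint a b.
Proof.
by case/hbarsP=> i ni -> /vbarsP[j nj ->]; apply: hbar_vbar_meet; apply: ltnW.
Qed.

Lemma hbars_vbars_disjoint : [disjoint hbars & vbars].
Proof.
apply/fdisjointP => _ /hbarsP[i _ ->]; apply/vbarsP => -[j _ [eij _ _ _]].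
by move: (ltrN10 R); rewrite eij ltNge ler0n.
Qed.

Lemma independent_hbars : independent hbars.
Proof.
move=> _ _ /hbarsP[i _ ->] /hbarsP[k _ ->] ik p [/andP[_ /andP[ip1 ip2]]].
case/andP=> _ /andP[kp1 kp2]; have := le_trans ip1 kp2; have := le_trans kp1 ip2.
by rewrite !ler_nat => ki ik'; apply: ik; congr hbar; lia.
Qed.

Lemma independent_vbars : independent vbars.
Proof.
move=> _ _ /vbarsP[j _ ->] /vbarsP[k _ ->] jk p [/andP[/andP[jp1 jp2] _]].
case/andP=> /andP[kp1 kp2] _; have := le_trans jp1 kp2; have := le_trans kp1 jp2.
by rewrite !ler_nat => kj jk'; apply: jk; congr vbar; lia.
Qed.

End Grid.

Theorem lemma1 (R : realType) :
  (* (1) the lower-bound construction *)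
  (forall n : nat, exists A B : {fset rect R},
     [/\ #|` A| = n, #|` B| = n,
         (forall r, r \in (A `|` B) -> valid_rect r),
         independent A /\ independent B &
         forall (m : nat) (X : nat -> {fset rect R}),
           X 0%N = A -> X m = B ->
           (forall j, (j <= m)%N -> X j `<=` (A `|` B) /\ independent (X j)) ->
           (forall j, (j < m)%N -> #|` fsymdiff (X j) (X j.+1)| = 1%N) ->
           exists2 j, (j <= m)%N & X j = fset0])
  /\
  (* (2) in particular, every MIX function for rectangles has Gamma(2n) >= n *)
  (forall (MIX : {fset rect R} -> {fset rect R} -> nat -> {fset rect R})
          (Gamma : nat -> R),
     is_MIX MIX Gamma -> forall n : nat, n%:R <= Gamma (n + n)%N)
  /\
  (* (3) no beta-approximate fully dynamic structure with o(n) changes per update *)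
  (forall beta : R, 0 < beta ->
     ~ exists (D : seq (rect R) -> {fset rect R}) (f : nat -> R),
         [/\ dyn_beta_approx beta D, dyn_recourse_bound D f & little_o_n f]).
Proof.
split; [|split].
- move=> n; exists (hbars R n), (vbars R n); split.
  + exact: card_hbars.
  + exact: card_vbars.
  + exact: valid_grid.
  + by split; [exact: independent_hbars | exact: independent_vbars].
  + exact: reconfiguration_meets_empty (@hbars_vbars_cross R n) (hbars_vbars_disjoint R n).
- move=> MIX Gamma MIX_Gamma n.
  have := MIX_Gamma _ _ (@independent_hbars R n) (@independent_vbars R n).
  rewrite /= card_hbars card_vbars => -[MIX0 MIXN MIX_indep MIX_step MIX_card].
  have MIX_sub j (jN : (j <= n + n)%N) := proj1 (and_comm _ _) (MIX_indep j jN).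
  have [j jN MIXj] := reconfiguration_meets_empty (@hbars_vbars_cross R n)
    (hbars_vbars_disjoint R n) MIX0 MIXN MIX_sub MIX_step.
  by have := MIX_card j jN; rewrite MIXj cardfs0 minnn subr_le0.
- move=> beta beta_gt0 [D [f [D_approx D_recourse f_small]]].
  have [N f_le] := f_small (beta / 2) (divr_gt0 beta_gt0 (ltr0Sn _ 1)).
  pose n := N.+1.
  have card_vh : #|` vbars R n| = #|` hbars R n| by rewrite card_hbars card_vbars.
  have [|h [u [valid_hu Ns recourse_large]]] :=
    swap_history_large_recourse (@hbars_vbars_cross R n) (hbars_vbars_disjoint R n)
      (@independent_hbars R n) (@independent_vbars R n) card_vh (@valid_grid R n)
      beta_gt0 D_approx; first by rewrite card_hbars.
  rewrite card_hbars in Ns; set s := #|` stored (rcons h u)| in Ns recourse_large.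
  have s_pos : 0 < beta * s%:R by rewrite mulr_gt0 // ltr0n (leq_trans _ Ns).
  have := D_recourse h u valid_hu; have := f_le s (ltnW Ns); have := ler_norm (f s).
  rewrite -/s mulrAC; lra.
Qed.
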